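(* Let $S$ be a finite set of training examples, each $i\in S$ having weight $w_i>0$ and label $y_i\in Y$, where $Y$ is a finite label set. Let $S$ be partitioned into a finite family $R$ of nonempty leaves, and let $A\subseteq S$ be the set of assessed (seen) examples. For a leaf $\rho\in R$ and $y\in Y$ write $Z_\rho=\sum_{i\in\rho}w_i$, $Z_\rho^y=\sum_{i\in\rho,\,y_i=y}w_i$, $Z_u(\rho)=\sum_{i\in\rho\cap A}w_i$, $Z_u^y(\rho)=\sum_{i\in\rho\cap A,\,y_i=y}w_i$, and let $Z_n=\sum_{i\in S}w_i$, $w=\sum_{i\in S\setminus A}w_i$, $w^y=\sum_{i\in S\setminus A,\,y_i=y}w_i$. Define \[ \epsilon_n := \sum_{\rho\in R}\frac{Z_\rho}{Z_n}\left(-\sum_{y\in Y}\frac{Z_\rho^y}{Z_\rho}\lg\frac{Z_\rho^y}{Z_\rho}\right),\qquad Z_u\epsilon_u(\rho) := -\sum_{y\in Y}Z_u^y(\rho)\lg\frac{Z_u^y(\rho)}{Z_u(\rho)}. \] Assume $Z_u^y(\rho)>0$ for every $\rho\in R$ and $y\in Y$. Then \[ \sum_{\rho\in R} Z_u\epsilon_u(\rho) \;\le\; Z_n\epsilon_n \;\le\; \sum_{\rho\in R}\left[Z_u\epsilon_u(\rho) + w\lg|Y| + \sum_{y\in Y}\bigl(Z_u^y(\rho)+w^y\bigr)\lg\frac{Z_u(\rho)+w}{Z_u^y(\rho)}\right]. \]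
   Context: $\lg$ is the base-2 logarithm with the convention $0\lg 0=0$. $\epsilon_n$ is the conditional label entropy of the leaves (the ''error'' term used for information-gain splitting), computed with all examples; $Z_u\epsilon_u(\rho)$ is the corresponding weighted entropy computed only on the seen examples of leaf $\rho$. *)

From mathcomp Require Import all_boot.
From Stdlib Require Import Reals.

Set Implicit Arguments.
Unset Strict Implicit.
Unset Printing Implicit Defensive.

Definition lg (x : R) : R := (ln x / ln 2)%R.

Definition plg (p : R) : R := if Req_EM_T p 0 then 0%R else (p * lg p)%R.

Definition rsum {T : finType} (P : pred T) (f : T -> R) : R :=
  \big[Rplus/0%R]_(i | P i) f i.

Section Quantities.
Variables (T Y : finType) (wt : T -> R) (lab : T -> Y) (A : {set T}).

Definition Zl (rho : {set T}) : R := rsum (fun i => i \in rho) wt.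
Definition Zly (rho : {set T}) (y : Y) : R :=
  rsum (fun i => (i \in rho) && (lab i == y)) wt.
Definition Zu (rho : {set T}) : R := rsum (fun i => (i \in rho) && (i \in A)) wt.
Definition Zuy (rho : {set T}) (y : Y) : R :=
  rsum (fun i => [&& i \in rho, i \in A & lab i == y]) wt.
Definition Zn : R := rsum predT wt.
Definition wun : R := rsum (fun i => i \notin A) wt.
Definition wuny (y : Y) : R := rsum (fun i => (i \notin A) && (lab i == y)) wt.

Definition eps_n (P : {set {set T}}) : R :=
  rsum (fun rho => rho \in P)
    (fun rho => (Zl rho / Zn * - rsum predT (fun y => plg (Zly rho y / Zl rho)))%R).

Definition Zu_eps_u (rho : {set T}) : R :=
  (- rsum predT (fun y => Zuy rho y * lg (Zuy rho y / Zu rho)))%R.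
End Quantities.

(** Per leaf, [-sum_y Z^y lg (Z^y / Z)] is the unnormalised entropy
    [H(c) = sum_y c_y lg (C / c_y)] of the label weights [c], with [C = sum_y c_y].
    [H] is monotone in each weight (its partial derivatives are [lg (C / c_y) >= 0]),
    which gives the lower bound since the seen weights are dominated by all weights.
    For the upper bound each term [c_y lg (C / c_y)] is bounded separately, using
    [Z^y <= Z_u^y + w^y] and [Z <= Z_u + w]; the remaining summands on the right are
    nonnegative. *)
From HB Require Import structures.
From mathcomp Require Import all_boot.
From Stdlib Require Import Reals Lra Psatz.

Set Implicit Arguments.
Unset Strict Implicit.

HB.instance Definition _ :=
  Monoid.isComLaw.Build R 0%R Rplus
    (fun a b c => esym (Rplus_assoc a b c)) Rplus_comm Rplus_0_l.

Open Scope R_scope.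

Section RealSums.
Variable T : finType.
Implicit Types (P Q : pred T) (f g : T -> R).

Lemma rsum_le P f g : (forall i, P i -> f i <= g i) -> rsum P f <= rsum P g.
Proof. by move=> fg; apply: (big_ind2 Rle) => //; [lra | move=> *; lra]. Qed.

Lemma rsum_ge0 P f : (forall i, P i -> 0 <= f i) -> 0 <= rsum P f.
Proof. by move=> f0; apply: (big_ind (Rle 0)) => //; [lra | move=> *; lra]. Qed.

Lemma rsumD P f g : rsum P (fun i => f i + g i) = rsum P f + rsum P g.
Proof. by rewrite /rsum big_split. Qed.

Lemma rsumMl P c f : c * rsum P f = rsum P (fun i => c * f i).
Proof.
by apply: (big_ind2 (fun x y => c * x = y)) => [|x1 x2 y1 y2 <- <-|//]; lra.
Qed.

Lemma rsumN P f : - rsum P f = rsum P (fun i => - f i).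
Proof.
by apply: (big_ind2 (fun x y => - x = y)) => [|x1 x2 y1 y2 <- <-|//]; lra.
Qed.

Lemma eq_rsum P f g : (forall i, P i -> f i = g i) -> rsum P f = rsum P g.
Proof. by move=> fg; apply: eq_bigr. Qed.

Lemma rsumID Q P f :
  rsum P f = rsum (fun i => P i && Q i) f + rsum (fun i => P i && ~~ Q i) f.
Proof. exact: bigID. Qed.

Lemma sub_rsum P Q f : (forall i, 0 <= f i) -> (forall i, P i -> Q i) ->
  rsum P f <= rsum Q f.
Proof.
move=> f0 PQ; rewrite /rsum [X in _ <= X](bigID P) /= (eq_bigl P) => [|i]; last first.
  by case Pi: (P i); rewrite ?andbF ?andbT ?PQ.
have : 0 <= \big[Rplus/0]_(i | Q i && ~~ P i) f i.
  by apply: (big_ind (Rle 0)) => //; [lra | move=> *; lra].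
lra.
Qed.

Lemma rsum_term_le P f i : (forall j, 0 <= f j) -> P i -> f i <= rsum P f.
Proof.
move=> f0 Pi; rewrite /rsum (bigD1 i Pi) /=.
have : 0 <= \big[Rplus/0]_(j | P j && (j != i)) f j.
  by apply: (big_ind (Rle 0)) => //; [lra | move=> *; lra].
lra.
Qed.

End RealSums.

Lemma ln2_gt0 : 0 < ln 2.
Proof. rewrite -ln_1; apply: ln_increasing; lra. Qed.

Lemma ln_le x y : 0 < x -> x <= y -> ln x <= ln y.
Proof. by move=> x0 [xy | ->]; [left; apply: ln_increasing | right]. Qed.

Lemma ln_div x y : 0 < x -> 0 < y -> ln (x / y) = ln x - ln y.
Proof.
move=> x0 y0; rewrite /Rdiv ln_mult ?ln_Rinv //; last exact: Rinv_0_lt_compat.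
Qed.

Lemma ln_le_sub1 x : 0 < x -> ln x <= x - 1.
Proof. by move=> x0; have := exp_ineq1_le (ln x); rewrite exp_ln //; lra. Qed.

Lemma lgE x : lg x = ln x * / ln 2.
Proof. by []. Qed.

Lemma lg_le x y : 0 < x -> x <= y -> lg x <= lg y.
Proof.
move=> x0 xy; apply: Rmult_le_compat_r; last exact: ln_le.
by left; apply/Rinv_0_lt_compat/ln2_gt0.
Qed.

Lemma lg_ge0 x : 1 <= x -> 0 <= lg x.
Proof. by move=> x1; rewrite -(Rmult_0_l (/ ln 2)) -ln_1; apply: lg_le; lra. Qed.

Lemma lg_div_ge0 x y : 0 < x -> x <= y -> 0 <= lg (y / x).
Proof.
move=> x0 xy; apply: lg_ge0.
by apply: (Rmult_le_reg_r x) => //; rewrite /Rdiv Rmult_assoc Rinv_l; lra.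
Qed.

(* The tangent-line bound [ln r <= r - 1] at [r = A c / (a C)], combined with
   [a <= c] and [lg (C / c) >= 0]. *)
Lemma mul_lg_div_le_shift a c A C : 0 < a -> a <= c -> c <= C -> 0 < A ->
  a * lg (A / a) <= c * lg (C / c) + (A * c / C - a) / ln 2.
Proof.
move=> a0 ac cC A0.
have c0 : 0 < c by lra.
have C0 : 0 < C by lra.
have tangent : a * (ln A - ln a - (ln C - ln c)) <= A * c / C - a.
  have := ln_le_sub1 (Rdiv_lt_0_compat (A * c) (a * C) ltac:(nra) ltac:(nra)).
  rewrite ln_div ?ln_mult; try nra.
  have -> : A * c / (a * C) - 1 = (A * c / C - a) / a by field; lra.
  move=> h; apply: (Rmult_le_reg_r (/ a)); first exact: Rinv_0_lt_compat.
  rewrite Rmult_comm -Rmult_assoc Rinv_l; lra.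
have lgCc := lg_div_ge0 c0 cC.
have Li : 0 < / ln 2 by apply/Rinv_0_lt_compat/ln2_gt0.
rewrite !lgE !ln_div // in lgCc *.
have : a * (ln C - ln c) <= c * (ln C - ln c) by nra.
rewrite /Rdiv; nra.
Qed.

Lemma mul_lg_div_le a c d C D : 0 < a -> a <= c -> c <= C -> C <= D -> c <= d ->
  c * lg (C / c) <= d * lg (D / a).
Proof.
move=> a0 ac cC CD cd.
have c0 : 0 < c by lra.
have lgCc := lg_div_ge0 c0 cC.
have lg_mono : lg (C / c) <= lg (D / a).
  rewrite !lgE !ln_div; try lra; apply: Rmult_le_compat_r.
    by left; apply/Rinv_0_lt_compat/ln2_gt0.
  by have := ln_le (Rlt_le_trans _ _ _ c0 cC) CD; have := ln_le a0 ac; lra.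
nra.
Qed.

Section WeightedEntropy.
Variable Y : finType.
Implicit Types a b c : Y -> R.

Definition weighted_entropy c : R :=
  rsum predT (fun y => c y * lg (rsum predT c / c y)).

Lemma weighted_entropy_ge0 c : (forall y, 0 < c y) -> 0 <= weighted_entropy c.
Proof.
move=> c0; apply: rsum_ge0 => y _; apply: Rmult_le_pos; first by left.
by apply: lg_div_ge0 => //; apply: rsum_term_le => // z; left.
Qed.

(* Summing [mul_lg_div_le_shift] over [y], the shifts add up to [A C / C - A = 0]. *)
Lemma weighted_entropy_mono a c : (forall y, 0 < a y) -> (forall y, a y <= c y) ->
  weighted_entropy a <= weighted_entropy c.
Proof.
move=> a0 ac.
have c0 y : 0 <= c y by have := a0 y; have := ac y; lra.
pose C := rsum predT c; pose A := rsum predT a.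
have cC y : c y <= C by apply: rsum_term_le.
have L := ln2_gt0.
have [y0 _ | Y0] := pickP (fun _ : Y => true); last first.
  by rewrite /weighted_entropy /rsum !big_pred0 //; lra.
have C0 : 0 < C by have := cC y0; have := a0 y0; have := ac y0; lra.
have shift0 : rsum predT (fun y => (A * c y / C - a y) / ln 2) = 0.
  rewrite (@eq_rsum _ _ _ (fun y => A / (C * ln 2) * c y + - / ln 2 * a y)).
    by rewrite rsumD -!rsumMl -/C -/A; field; lra.
  by move=> y _; field; lra.
rewrite /weighted_entropy -/C -/A -[X in _ <= X]Rplus_0_r -shift0 -rsumD.
apply: rsum_le => y _; apply: mul_lg_div_le_shift => //.
by apply: Rlt_le_trans (a0 y) _; apply: rsum_term_le => // z; left.
Qed.

Lemma weighted_entropy_le_bound a b c D :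
  (forall y, 0 < a y) -> (forall y, a y <= c y <= a y + b y) -> rsum predT c <= D ->
  weighted_entropy c <= rsum predT (fun y => (a y + b y) * lg (D / a y)).
Proof.
move=> a0 abc cD; apply: rsum_le => y _.
have c0 z : 0 <= c z by have := a0 z; have := abc z; lra.
have [ac cab] := abc y.
by apply: mul_lg_div_le => //; apply: rsum_term_le.
Qed.
End WeightedEntropy.

Lemma plg_div c C : 0 < c -> 0 < C -> - (C * plg (c / C)) = c * lg (C / c).
Proof.
move=> c0 C0; have cC0 := Rdiv_lt_0_compat c C c0 C0.
rewrite /plg; destruct (Req_EM_T (c / C) 0); first lra.
by rewrite /= !lgE !ln_div //; field; have := ln2_gt0; lra.
Qed.

Section LeafWeights.
Variables (T Y : finType) (wt : T -> R) (lab : T -> Y) (A : {set T}).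
Hypothesis wt_ge0 : forall i, 0 <= wt i.

Lemma sum_Zuy rho : rsum predT (Zuy wt lab A rho) = Zu wt A rho.
Proof.
rewrite /Zu /rsum (partition_big lab predT) //.
by apply: eq_bigr => y _; apply: eq_bigl => i; rewrite andbA.
Qed.

Lemma sum_Zly rho : rsum predT (Zly wt lab rho) = Zl wt rho.
Proof. by rewrite /Zl /rsum (partition_big lab predT). Qed.

Lemma Zuy_le_Zly rho y : Zuy wt lab A rho y <= Zly wt lab rho y.
Proof. by apply: sub_rsum => // i /and3P[-> _]. Qed.

Lemma Zly_le_Zl rho y : Zly wt lab rho y <= Zl wt rho.
Proof. by apply: sub_rsum => // i /andP[]. Qed.

Lemma Zl_le_Zn rho : Zl wt rho <= Zn wt.
Proof. exact: sub_rsum. Qed.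

Lemma Zly_le_Zuy_wuny rho y : Zly wt lab rho y <= Zuy wt lab A rho y + wuny wt lab A y.
Proof.
rewrite /Zly (rsumID (fun i => i \in A)).
apply: Rplus_le_compat.
  right; apply: eq_bigl => i.
  by case: (i \in rho); case: (i \in A); rewrite ?andbT ?andbF.
by apply: sub_rsum => // i /andP[/andP[_ ->] ->].
Qed.

Lemma Zl_le_Zu_wun rho : Zl wt rho <= Zu wt A rho + wun wt A.
Proof.
rewrite /Zl (rsumID (fun i => i \in A)); apply: Rplus_le_compat; first exact: Rle_refl.
by apply: sub_rsum => // i /andP[].
Qed.

Lemma Zu_eps_uE rho : (forall y, 0 < Zuy wt lab A rho y) ->
  Zu_eps_u wt lab A rho = weighted_entropy (Zuy wt lab A rho).
Proof.
move=> Zuy0; rewrite /Zu_eps_u /weighted_entropy sum_Zuy.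
rewrite rsumN; apply: eq_rsum => y _.
have Zu0 : 0 < Zu wt A rho.
  by apply: Rlt_le_trans (Zuy0 y) _; rewrite -sum_Zuy; apply: rsum_term_le => // z; left.
by rewrite !lgE !ln_div //; lra.
Qed.

Lemma Zn_eps_nE (P : {set {set T}}) :
  (forall rho, rho \in P -> 0 < Zl wt rho) ->
  (forall rho y, rho \in P -> 0 < Zly wt lab rho y) ->
  Zn wt * eps_n wt lab P =
  rsum (fun rho => rho \in P) (fun rho => weighted_entropy (Zly wt lab rho)).
Proof.
move=> Zl0 Zly0; rewrite /eps_n rsumMl; apply: eq_rsum => rho Prho.
have Zn0 : 0 < Zn wt by apply: Rlt_le_trans (Zl0 _ Prho) (Zl_le_Zn rho).
have -> : Zn wt * (Zl wt rho / Zn wt * - rsum predT (fun y => plg (Zly wt lab rho y / Zl wt rho)))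
  = - (Zl wt rho * rsum predT (fun y => plg (Zly wt lab rho y / Zl wt rho))).
  by field; lra.
rewrite rsumMl rsumN /weighted_entropy sum_Zly; apply: eq_rsum => y _.
by rewrite plg_div; auto.
Qed.
End LeafWeights.

Theorem mainTheorem4 (T Y : finType) (wt : T -> R) (lab : T -> Y)
  (P : {set {set T}}) (A : {set T}) :
  (forall i, (0 < wt i)%R) ->
  partition P [set: T] ->
  (forall rho, rho \in P -> rho != set0) ->
  (forall rho y, rho \in P -> (0 < Zuy wt lab A rho y)%R) ->
  (rsum (fun rho => rho \in P) (Zu_eps_u wt lab A)
     <= Zn wt * eps_n wt lab P)%R /\
  (Zn wt * eps_n wt lab P
     <= rsum (fun rho => rho \in P)
          (fun rho => Zu_eps_u wt lab A rho
             + wun wt A * lg (INR #|Y|)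
             + rsum predT (fun y => (Zuy wt lab A rho y + wuny wt lab A y)
                   * lg ((Zu wt A rho + wun wt A) / Zuy wt lab A rho y)))%R)%R.
Proof.
(* Both bounds hold leaf by leaf, so the leaves need not partition [T]. *)
move=> wt_gt0 _ leaf_nonempty Zuy_gt0.
have wt_ge0 i : 0 <= wt i by left.
have Zly_gt0 rho y : rho \in P -> 0 < Zly wt lab rho y.
  by move=> Prho; apply: Rlt_le_trans (Zuy_gt0 _ y Prho) (Zuy_le_Zly _ _ wt_ge0 _ _).
have Zl_gt0 rho : rho \in P -> 0 < Zl wt rho.
  move=> Prho; have [i _] := set0Pn _ (leaf_nonempty _ Prho).
  exact: Rlt_le_trans (Zly_gt0 _ (lab i) Prho) (Zly_le_Zl _ wt_ge0 _ _).
have Zu_eps_u_leaf rho :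
    rho \in P -> Zu_eps_u wt lab A rho = weighted_entropy (Zuy wt lab A rho).
  by move=> Prho; apply: Zu_eps_uE => // y; apply: Zuy_gt0.
rewrite Zn_eps_nE //; split; apply: rsum_le => rho Prho; rewrite Zu_eps_u_leaf //.
  by apply: weighted_entropy_mono => y; [exact: Zuy_gt0 | exact: Zuy_le_Zly].
have lgY : 0 <= lg (INR #|Y|).
  have [i _] := set0Pn _ (leaf_nonempty _ Prho).
  by apply/lg_ge0/(le_INR 1)/leP/card_gt0P; exists (lab i).
have bound : weighted_entropy (Zly wt lab rho) <= rsum predT (fun y =>
    (Zuy wt lab A rho y + wuny wt lab A y) * lg ((Zu wt A rho + wun wt A) / Zuy wt lab A rho y)).
  apply: weighted_entropy_le_bound => [y | y | ]; first exact: Zuy_gt0.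
    by split; [exact: Zuy_le_Zly | exact: Zly_le_Zuy_wuny].
  by rewrite sum_Zly //; exact: Zl_le_Zu_wun.
have := weighted_entropy_ge0 (Zuy_gt0 _^~ Prho).
have : 0 <= wun wt A * lg (INR #|Y|) by apply: Rmult_le_pos => //; apply: rsum_ge0.
lra.
Qed.
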